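(* Let $\mathbb{C}$ be an action representable category and let $\mathbb{X}$ be a Birkhoff subcategory of $\mathbb{C}$. Suppose there exist monomorphisms $m:S\to B$ and $m':S\to B'$ in $\mathbb{X}$, monomorphisms $u:B\to D$ and $u':B'\to D$ in $\mathbb{C}$, an object $X$ of $\mathbb{X}$ and a monomorphism $v:D\to [X]$ in $\mathbb{C}$ such that (i) $um=u'm'$; (ii) $m$ and $m'$ cannot be amalgamated in $\mathbb{X}$; (iii) the split extensions (with kernel $X$) corresponding to the morphisms $vu:B\to[X]$ and $vu':B'\to[X]$ under the representation of $\mathrm{SplExt}(-,X)$ in $\mathbb{C}$ lie in $\mathbb{X}$ (i.e. all their objects belong to $\mathbb{X}$). Then $\mathbb{X}$ is not weakly action representable (and hence not action representable).
   Context: Composition is written right to left. $\mathbb{C}$ is a pointed protomodular category with finite limits (e.g. semi-abelian). A split extension of $B$ with kernel $X$ is a diagram $X\xrightarrow{\kappa}A\underset{\beta}{\overset{\alpha}{\rightleftarrows}}B$ with $\kappa$ the kernel of $\alpha$ and $\alpha\beta=1_B$. For each object $X$, $\mathrm{SplExt}(-,X):\mathbb{C}^{op}\to\mathbf{Set}$ sends $B$ to the set of isomorphism classes of split extensions of $B$ with kernel $X$, and acts on morphisms $p:E\to B$ by pulling back along $p$. $\mathbb{C}$ is action representable if each $\mathrm{SplExt}(-,X)$ is representable; the representing object is denoted $[X]$, so morphisms $B\to[X]$ correspond to isomorphism classes of split extensions of $B$ with kernel $X$. A category is weakly action representable if for each $X$ there is an object $M$ and a monomorphism of functors $\mathrm{SplExt}(-,X)\to\hom(-,M)$.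 A Birkhoff subcategory is a full reflective subcategory closed under subobjects and regular quotients. Two monomorphisms $m:S\to B$, $m':S\to B'$ can be amalgamated in a category if there exist monomorphisms $i:B\to M$, $i':B'\to M$ in that category with $im=i'm'$. *)

Set Implicit Arguments.
Unset Strict Implicit.

Record Cat := {
  Ob :> Type;
  Hom : Ob -> Ob -> Type;
  idm : forall a, Hom a a;
  comp : forall a b c, Hom b c -> Hom a b -> Hom a c;
  comp_assoc : forall a b c d (h : Hom c d) (g : Hom b c) (f : Hom a b),
      comp h (comp g f) = comp (comp h g) f;
  comp_id_l : forall a b (f : Hom a b), comp (idm b) f = f;
  comp_id_r : forall a b (f : Hom a b), comp f (idm a) = f
}.

Arguments Hom {C} a b : rename.
Arguments idm {C} a : rename.
Arguments comp {C a b c} g f : rename.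
Notation "g \o f" := (comp g f) (at level 40, left associativity).

Section Notions.
Variable C : Cat.

Definition Mono {a b : C} (f : Hom a b) : Prop :=
  forall (z : C) (g h : Hom z a), f \o g = f \o h -> g = h.

Definition IsIso {a b : C} (f : Hom a b) : Prop :=
  exists g : Hom b a, g \o f = idm a /\ f \o g = idm b.

Definition IsTerminal (t : C) : Prop :=
  forall a : C, exists f : Hom a t, forall g : Hom a t, g = f.

Definition IsInitial (i : C) : Prop :=
  forall a : C, exists f : Hom i a, forall g : Hom i a, g = f.

Definition IsZeroObj (z : C) : Prop := IsInitial z /\ IsTerminal z.

Definition Pointed : Prop := exists z : C, IsZeroObj z.

Definition IsZeroMor {a b : C} (f : Hom a b) : Prop :=
  exists (z : C) (g : Hom a z) (h : Hom z b), IsZeroObj z /\ f = h \o g.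

Definition IsKernel {K A B : C} (k : Hom K A) (f : Hom A B) : Prop :=
  IsZeroMor (f \o k) /\
  forall (Z : C) (g : Hom Z A), IsZeroMor (f \o g) ->
    exists h : Hom Z K, k \o h = g /\ forall h' : Hom Z K, k \o h' = g -> h' = h.

Definition IsPullback {a b c P : C} (f : Hom a c) (g : Hom b c)
    (p1 : Hom P a) (p2 : Hom P b) : Prop :=
  f \o p1 = g \o p2 /\
  forall (Z : C) (x : Hom Z a) (y : Hom Z b), f \o x = g \o y ->
    exists h : Hom Z P, (p1 \o h = x /\ p2 \o h = y) /\
      forall h' : Hom Z P, p1 \o h' = x -> p2 \o h' = y -> h' = h.

Definition HasPullbacks : Prop :=
  forall (a b c : C) (f : Hom a c) (g : Hom b c),
    exists (P : C) (p1 : Hom P a) (p2 : Hom P b), IsPullback f g p1 p2.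

Definition FinitelyComplete : Prop :=
  (exists t : C, IsTerminal t) /\ HasPullbacks.

Definition IsCoequalizer {Z a b : C} (x y : Hom Z a) (q : Hom a b) : Prop :=
  q \o x = q \o y /\
  forall (W : C) (g : Hom a W), g \o x = g \o y ->
    exists h : Hom b W, h \o q = g /\ forall h' : Hom b W, h' \o q = g -> h' = h.

Definition RegularEpi {a b : C} (q : Hom a b) : Prop :=
  exists (Z : C) (x y : Hom Z a), IsCoequalizer x y q.

Record SplitExt (B X : C) := {
  se_A : C;
  se_k : Hom X se_A;
  se_a : Hom se_A B;
  se_b : Hom B se_A;
  se_ker : IsKernel se_k se_a;
  se_split : se_a \o se_b = idm B
}.

Definition SplExtIso {B X : C} (e e' : SplitExt B X) : Prop :=
  exists phi : Hom (se_A e) (se_A e'),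
    IsIso phi /\ phi \o se_k e = se_k e' /\ se_a e' \o phi = se_a e /\
    phi \o se_b e = se_b e'.

Definition PullbackOf {E B X : C} (e' : SplitExt E X) (e : SplitExt B X)
    (p : Hom E B) : Prop :=
  exists g : Hom (se_A e') (se_A e),
    IsPullback (se_a e) p g (se_a e') /\
    g \o se_b e' = se_b e \o p /\ g \o se_k e' = se_k e.

(* pointed protomodularity via the split short five lemma *)
Definition Protomodular : Prop :=
  forall (B B' X X' : C) (e : SplitExt B X) (e' : SplitExt B' X')
    (fk : Hom X X') (fa : Hom (se_A e) (se_A e')) (fb : Hom B B'),
    fa \o se_k e = se_k e' \o fk ->
    se_a e' \o fa = fb \o se_a e ->
    fa \o se_b e = se_b e' \o fb ->
    IsIso fk -> IsIso fb -> IsIso fa.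

(* (R, Phi) represents SplExt(-,X): Phi_B : hom(B,R) -> SplExt(B,X)/iso
   is a natural bijection (naturality w.r.t. pulling back). *)
Definition IsSplExtRepresentation (X R : C)
    (Phi : forall B : C, Hom B R -> SplitExt B X) : Prop :=
  (forall (B : C) (e : SplitExt B X), exists f : Hom B R, SplExtIso (Phi B f) e) /\
  (forall (B : C) (f g : Hom B R), SplExtIso (Phi B f) (Phi B g) -> f = g) /\
  (forall (E B : C) (p : Hom E B) (f : Hom B R), PullbackOf (Phi E (f \o p)) (Phi B f) p).

Definition SplExtRepresentable : Prop :=
  forall X : C, exists (R : C) (Phi : forall B : C, Hom B R -> SplitExt B X),
    IsSplExtRepresentation Phi.

Definition ActionRepresentable : Prop :=
  Pointed /\ FinitelyComplete /\ Protomodular /\ SplExtRepresentable.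

(* a monomorphism of functors SplExt(-,X) -> hom(-,M): a map on iso classes
   (iso-invariant), injective on iso classes, natural w.r.t. pullback *)
Definition WeaklyActionRepresentable : Prop :=
  forall X : C, exists (M : C) (tau : forall B : C, SplitExt B X -> Hom B M),
    (forall (B : C) (e e' : SplitExt B X), SplExtIso e e' -> tau B e = tau B e') /\
    (forall (B : C) (e e' : SplitExt B X), tau B e = tau B e' -> SplExtIso e e') /\
    (forall (E B : C) (p : Hom E B) (e : SplitExt B X) (e' : SplitExt E X),
        PullbackOf e' e p -> tau E e' = tau B e \o p).

Definition Amalgamable {S B B' : C} (m : Hom S B) (m' : Hom S B') : Prop :=
  exists (M : C) (i : Hom B M) (i' : Hom B' M), Mono i /\ Mono i' /\ i \o m = i' \o m'.

Definition Birkhoff (P : C -> Prop) : Prop :=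
  (forall c : C, exists (r : C) (eta : Hom c r), P r /\
      forall (y : C), P y -> forall g : Hom c y,
        exists h : Hom r y, h \o eta = g /\ forall h' : Hom r y, h' \o eta = g -> h' = h) /\
  (forall (a b : C) (m : Hom a b), Mono m -> P b -> P a) /\
  (forall (a b : C) (q : Hom a b), RegularEpi q -> P a -> P b).

End Notions.

Arguments Birkhoff : clear implicits.
Arguments ActionRepresentable : clear implicits.
Arguments WeaklyActionRepresentable : clear implicits.
Arguments SplExtRepresentable : clear implicits.
Arguments Pointed : clear implicits.
Arguments FinitelyComplete : clear implicits.
Arguments Protomodular : clear implicits.
Arguments HasPullbacks : clear implicits.

Definition FullSub (C : Cat) (P : C -> Prop) : Cat.
Proof.
  refine {| Ob := { c : C | P c };
            Hom := fun x y => @Hom C (proj1_sig x) (proj1_sig y);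
            idm := fun x => idm (proj1_sig x);
            comp := fun x y z g f => g \o f |}.
  - intros; apply comp_assoc.
  - intros; apply comp_id_l.
  - intros; apply comp_id_r.
Defined.
Arguments FullSub : clear implicits.

(* A weak representation (M, tau) of SplExt(-, X) in X would turn every
   f : B -> [X] whose split extension lies in X into a morphism
   tau(f) : B -> M of X, naturally in B and injectively in f.  Hence
   tau(f) is a monomorphism whenever f is one, and tau(f) m = tau(f m).
   Applied to f = v u and f' = v u', where v u m = v u' m', this amalgamates
   m and m' inside X, which is excluded. *)

From Stdlib Require Import IndefiniteDescription.

Section Generalities.
Context {C : Cat}.

Lemma zero_mor_unique {a b : C} (f f' : Hom a b) :
  IsZeroMor f -> IsZeroMor f' -> f = f'.
Proof.
  intros [z [g [h [[zi zt] ->]]]] [z' [g' [h' [[zi' zt'] ->]]]].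
  destruct (zi z') as [t _].
  assert (Eh : h = h' \o t).
  { destruct (zi b) as [w Hw]. rewrite (Hw h), (Hw (h' \o t)). reflexivity. }
  assert (Eg : t \o g = g').
  { destruct (zt' a) as [w Hw]. rewrite (Hw g'), (Hw (t \o g)). reflexivity. }
  rewrite Eh, <- comp_assoc, Eg. reflexivity.
Qed.

Lemma zero_mor_factors {z a b : C} {f : Hom a b} :
  IsZeroObj z -> IsZeroMor f -> exists (g : Hom a z) (h : Hom z b), f = h \o g.
Proof.
  intros [zi zt] Hf. destruct (zt a) as [g _]. destruct (zi b) as [h _].
  exists g, h. apply zero_mor_unique; [exact Hf|].
  exists z, g, h. split; [split; assumption | reflexivity].
Qed.

Lemma mono_comp {a b c : C} {g : Hom b c} {f : Hom a b} :
  Mono g -> Mono f -> Mono (g \o f).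
Proof.
  intros Hg Hf z x y Hxy. apply Hf, Hg. rewrite !comp_assoc. exact Hxy.
Qed.

Lemma split_mono_mono {a b : C} {f : Hom a b} {s : Hom b a} :
  s \o f = idm a -> Mono f.
Proof.
  intros Hs z g h Hgh.
  rewrite <- (comp_id_l g), <- (comp_id_l h), <- Hs, <- !comp_assoc, Hgh.
  reflexivity.
Qed.

Lemma terminal_mono {t b : C} (f : Hom t b) : IsTerminal t -> Mono f.
Proof.
  intros Ht z g h _. destruct (Ht z) as [w Hw]. rewrite (Hw g), (Hw h). reflexivity.
Qed.

Lemma pullback_mor_unique {a b c Q Z : C} {f : Hom a c} {g : Hom b c}
    {p1 : Hom Q a} {p2 : Hom Q b} {h h' : Hom Z Q} :
  IsPullback f g p1 p2 -> p1 \o h = p1 \o h' -> p2 \o h = p2 \o h' -> h = h'.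
Proof.
  intros [Hc Hu] E1 E2.
  assert (Hsq : f \o (p1 \o h') = g \o (p2 \o h')).
  { rewrite !comp_assoc, Hc. reflexivity. }
  destruct (Hu Z _ _ Hsq) as [w [_ Uw]].
  rewrite (Uw h E1 E2), (Uw h' eq_refl eq_refl). reflexivity.
Qed.

Lemma SplExtIso_refl {B X : C} (e : SplitExt B X) : SplExtIso e e.
Proof.
  exists (idm _). split.
  - exists (idm _). split; apply comp_id_l.
  - split; [apply comp_id_l | split; [apply comp_id_r | apply comp_id_l]].
Qed.

Lemma SplExtIso_sym {B X : C} (e e' : SplitExt B X) :
  SplExtIso e e' -> SplExtIso e' e.
Proof.
  intros [phi [[psi [I1 I2]] [K [A Bq]]]].
  exists psi. split; [exists phi; split; assumption|].
  split; [|split].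
  - rewrite <- K, comp_assoc, I1, comp_id_l. reflexivity.
  - rewrite <- A, <- comp_assoc, I2, comp_id_r. reflexivity.
  - rewrite <- Bq, comp_assoc, I1, comp_id_l. reflexivity.
Qed.

Lemma SplExtIso_trans {B X : C} (e e' e'' : SplitExt B X) :
  SplExtIso e e' -> SplExtIso e' e'' -> SplExtIso e e''.
Proof.
  intros [phi [[psi [I1 I2]] [K [A Bq]]]] [phi' [[psi' [I1' I2']] [K' [A' Bq']]]].
  exists (phi' \o phi). split.
  - exists (psi \o psi'). split.
    + rewrite <- comp_assoc, (comp_assoc psi'), I1', comp_id_l, I1. reflexivity.
    + rewrite <- comp_assoc, (comp_assoc phi), I2, comp_id_l, I2'. reflexivity.
  - split; [|split].
    + rewrite <- comp_assoc, K, K'. reflexivity.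
    + rewrite comp_assoc, A', A. reflexivity.
    + rewrite <- comp_assoc, Bq, Bq'. reflexivity.
Qed.

Lemma PullbackOf_iso {E B X : C} (p : Hom E B) (e e' : SplitExt B X)
    (e1 e2 : SplitExt E X) :
  PullbackOf e1 e p -> PullbackOf e2 e' p -> SplExtIso e e' -> SplExtIso e1 e2.
Proof.
  intros [g1 [Pb1 [Hb1 Hk1]]] [g2 [Pb2 [Hb2 Hk2]]]
         [phi [[phii [I1 I2]] [K [A Bq]]]].
  pose proof Pb1 as [Hc1 Hu1]. pose proof Pb2 as [Hc2 Hu2].
  assert (Sq1 : se_a e' \o (phi \o g1) = p \o se_a e1).
  { rewrite comp_assoc, A. exact Hc1. }
  destruct (Hu2 _ _ _ Sq1) as [psi [[G2 A2] _]].
  assert (Sq2 : se_a e \o (phii \o g2) = p \o se_a e2).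
  { rewrite comp_assoc, <- Hc2, <- A, <- (comp_assoc _ phi), I2, comp_id_r. reflexivity. }
  destruct (Hu1 _ _ _ Sq2) as [psi' [[G1 A1] _]].
  exists psi. split; [exists psi'; split|split; [|split]].
  - apply (pullback_mor_unique Pb1).
    + rewrite comp_assoc, G1, <- comp_assoc, G2, comp_assoc, I1, comp_id_l, comp_id_r.
      reflexivity.
    + rewrite comp_assoc, A1, A2, comp_id_r. reflexivity.
  - apply (pullback_mor_unique Pb2).
    + rewrite comp_assoc, G2, <- comp_assoc, G1, comp_assoc, I2, comp_id_l, comp_id_r.
      reflexivity.
    + rewrite comp_assoc, A2, A1, comp_id_r. reflexivity.
  - apply (pullback_mor_unique Pb2).
    + rewrite comp_assoc, G2, <- comp_assoc, Hk1, K, Hk2. reflexivity.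
    + rewrite comp_assoc, A2.
      apply zero_mor_unique; [apply (se_ker e1) | apply (se_ker e2)].
  - exact A2.
  - apply (pullback_mor_unique Pb2).
    + rewrite comp_assoc, G2, <- comp_assoc, Hb1, comp_assoc, Bq, Hb2. reflexivity.
    + rewrite comp_assoc, A2, (se_split e1), (se_split e2). reflexivity.
Qed.

Lemma SplExtRepresentable_weakly :
  SplExtRepresentable C -> WeaklyActionRepresentable C.
Proof.
  intros H X. destruct (H X) as [R [Phi [Hsurj [Hinj Hnat]]]].
  exists R, (fun B e => proj1_sig (constructive_indefinite_description _ (Hsurj B e))).
  assert (Spec : forall B e,
    SplExtIso (Phi B (proj1_sig (constructive_indefinite_description _ (Hsurj B e)))) e).
  { intros B e. exact (proj2_sig (constructive_indefinite_description _ (Hsurj B e))). }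
  split; [|split].
  - intros B e e' Hee. apply Hinj.
    eapply SplExtIso_trans; [apply Spec|].
    eapply SplExtIso_trans; [exact Hee | apply SplExtIso_sym, Spec].
  - intros B e e' Heq. eapply SplExtIso_trans; [apply SplExtIso_sym, Spec|].
    rewrite Heq. apply Spec.
  - intros E B p e e' Hpb. apply Hinj.
    eapply SplExtIso_trans; [apply Spec|]. apply SplExtIso_sym.
    eapply PullbackOf_iso; [apply Hnat | exact Hpb | apply Spec].
Qed.

End Generalities.

Section BirkhoffClosure.
Context {C : Cat} {P : C -> Prop} (HP : Birkhoff C P).

Lemma Birkhoff_zero_obj {z x : C} : IsZeroObj z -> P x -> P z.
Proof.
  destruct HP as [_ [Hmono _]]. intros [zi zt] Px. destruct (zi x) as [f _].
  exact (Hmono z x f (terminal_mono f zt) Px).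
Qed.

(* The reflection unit of a pullback of objects of P is split by the
   universal property, so the pullback is a subobject of its reflection. *)
Lemma Birkhoff_pullback_closed {a b c Q : C} {f : Hom a c} {g : Hom b c}
    {p1 : Hom Q a} {p2 : Hom Q b} :
  IsPullback f g p1 p2 -> P a -> P b -> P c -> P Q.
Proof.
  destruct HP as [Hrefl [Hmono _]]. intros Hpb Pa Pb Pc.
  pose proof Hpb as [Hc Hu].
  destruct (Hrefl Q) as [r [eta [Pr Hr]]].
  destruct (Hr a Pa p1) as [h1 [E1 _]]. destruct (Hr b Pb p2) as [h2 [E2 _]].
  assert (Sq : f \o h1 = g \o h2).
  { destruct (Hr c Pc (f \o p1)) as [k [_ Uk]].
    rewrite (Uk (f \o h1)), (Uk (g \o h2)); try reflexivity.
    - rewrite <- comp_assoc, E2, Hc. reflexivity.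
    - rewrite <- comp_assoc, E1. reflexivity. }
  destruct (Hu r h1 h2 Sq) as [s [[S1 S2] _]].
  assert (Hsplit : s \o eta = idm Q).
  { apply (pullback_mor_unique Hpb).
    - rewrite comp_assoc, S1, E1, comp_id_r. reflexivity.
    - rewrite comp_assoc, S2, E2, comp_id_r. reflexivity. }
  exact (Hmono Q r eta (split_mono_mono Hsplit) Pr).
Qed.

End BirkhoffClosure.

Section FullSubcategory.
Context {C : Cat} {P : C -> Prop} {z0 : C} (pz0 : P z0) (hz0 : IsZeroObj z0).
Let F := FullSub C P.

Lemma zero_obj_full_sub {z : C} (pz : P z) :
  IsZeroObj z -> @IsZeroObj F (exist P z pz).
Proof.
  intros [zi zt]. split; intros [a pa].
  - destruct (zi a) as [f Hf]. exists f. exact Hf.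
  - destruct (zt a) as [f Hf]. exists f. exact Hf.
Qed.

Lemma zero_mor_full_sub (a b : F) (f : Hom (proj1_sig a) (proj1_sig b)) :
  @IsZeroMor F a b f <-> IsZeroMor f.
Proof.
  pose proof (zero_obj_full_sub pz0 hz0) as hz0F. split; intros Hf.
  - destruct (zero_mor_factors hz0F Hf) as [g [h ->]].
    exists z0, g, h. split; [exact hz0 | reflexivity].
  - destruct (zero_mor_factors hz0 Hf) as [g [h ->]].
    exists (exist P z0 pz0), g, h. split; [exact hz0F | reflexivity].
Qed.

Lemma IsKernel_full_sub (K A B : F) {k : Hom (proj1_sig K) (proj1_sig A)}
    {f : Hom (proj1_sig A) (proj1_sig B)} :
  IsKernel k f -> @IsKernel F K A B k f.
Proof.
  intros [Hz Hu]. split.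
  - apply zero_mor_full_sub. exact Hz.
  - intros Z g Hg. apply zero_mor_full_sub in Hg. exact (Hu _ g Hg).
Qed.

Definition lift_split_ext (B X : F) (e : SplitExt (proj1_sig B) (proj1_sig X))
    (pA : P (se_A e)) : @SplitExt F B X :=
  @Build_SplitExt F B X (exist P (se_A e) pA) (se_k e) (se_a e) (se_b e)
    (IsKernel_full_sub X (exist P (se_A e) pA) B (se_ker e)) (se_split e).

Lemma SplExtIso_lift (B X : F) (e e' : SplitExt (proj1_sig B) (proj1_sig X)) pA pA' :
  SplExtIso (lift_split_ext B X e pA) (lift_split_ext B X e' pA') <-> SplExtIso e e'.
Proof. reflexivity. Qed.

Lemma PullbackOf_lift (E B X : F) (e' : SplitExt (proj1_sig E) (proj1_sig X))
    (e : SplitExt (proj1_sig B) (proj1_sig X)) (p : Hom (proj1_sig E) (proj1_sig B))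
    pA' pA :
  PullbackOf e' e p -> PullbackOf (lift_split_ext E X e' pA') (lift_split_ext B X e pA) p.
Proof.
  intros [g [[Hc Hu] Hbk]]. exists g. split; [split|exact Hbk]; [exact Hc|].
  intros Z x y Hxy. exact (Hu (proj1_sig Z) x y Hxy).
Qed.

End FullSubcategory.

Section ClassifyingMaps.
Context {C : Cat} {P : C -> Prop} (HP : Birkhoff C P).
Context {z0 : C} (pz0 : P z0) (hz0 : IsZeroObj z0).
Let F := FullSub C P.

Context {X : F} {R : C} {Phi : forall Y : C, Hom Y R -> SplitExt Y (proj1_sig X)}.
Hypothesis Phi_injective :
  forall (Y : C) (f g : Hom Y R), SplExtIso (Phi Y f) (Phi Y g) -> f = g.
Hypothesis Phi_natural :
  forall (E Y : C) (p : Hom E Y) (f : Hom Y R), PullbackOf (Phi E (f \o p)) (Phi Y f) p.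

Context {M : F} {tau : forall Y : F, @SplitExt F Y X -> @Hom F Y M}.
Hypothesis tau_invariant :
  forall (Y : F) (e e' : @SplitExt F Y X), SplExtIso e e' -> tau Y e = tau Y e'.
Hypothesis tau_injective :
  forall (Y : F) (e e' : @SplitExt F Y X), tau Y e = tau Y e' -> SplExtIso e e'.
Hypothesis tau_natural :
  forall (E Y : F) (p : @Hom F E Y) (e : @SplitExt F Y X) (e' : @SplitExt F E X),
    PullbackOf e' e p -> tau E e' = tau Y e \o p.

Definition classify {Y : F} (f : Hom (proj1_sig Y) R) (pA : P (se_A (Phi _ f))) :
    @Hom F Y M :=
  tau Y (lift_split_ext pz0 hz0 Y X (Phi _ f) pA).

Lemma classify_ext {Y : F} {f1 f2 : Hom (proj1_sig Y) R} {p1 p2} :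
  f1 = f2 -> classify f1 p1 = classify f2 p2.
Proof. intros <-. apply tau_invariant, SplExtIso_lift, SplExtIso_refl. Qed.

Lemma classify_inj {Y : F} {f1 f2 : Hom (proj1_sig Y) R} {p1 p2} :
  classify f1 p1 = classify f2 p2 -> f1 = f2.
Proof.
  intros Heq. apply Phi_injective, (SplExtIso_lift pz0 hz0 Y X _ _ p1 p2).
  exact (tau_injective _ _ _ Heq).
Qed.

Lemma classify_natural {Y Z : F} {f : Hom (proj1_sig Y) R} pY
    (g : @Hom F Z Y) pZ :
  classify (f \o g) pZ = classify f pY \o g.
Proof. apply tau_natural, PullbackOf_lift, Phi_natural. Qed.

Lemma Phi_comp_closed {Y Z : F} {f : Hom (proj1_sig Y) R} (g : @Hom F Z Y) :
  P (se_A (Phi _ f)) -> P (se_A (Phi _ (f \o g))).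
Proof.
  intros pY. destruct (Phi_natural _ _ g f) as [h [Pb _]].
  exact (Birkhoff_pullback_closed HP Pb pY (proj2_sig Z) (proj2_sig Y)).
Qed.

Lemma classify_mono {Y : F} {f : Hom (proj1_sig Y) R} pY :
  Mono f -> @Mono F _ _ (classify f pY).
Proof.
  intros Hf Z g h Hgh.
  rewrite <- (classify_natural pY g (Phi_comp_closed g pY)),
          <- (classify_natural pY h (Phi_comp_closed h pY)) in Hgh.
  apply classify_inj, Hf in Hgh. exact Hgh.
Qed.

Lemma Amalgamable_classify {S B B' : F} {m : @Hom F S B} {m' : @Hom F S B'}
    {f : Hom (proj1_sig B) R} {f' : Hom (proj1_sig B') R} :
  Mono f -> Mono f' -> f \o m = f' \o m' ->
  P (se_A (Phi _ f)) -> P (se_A (Phi _ f')) -> Amalgamable m m'.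
Proof.
  intros Hf Hf' Hsq pB pB'.
  exists M, (classify f pB), (classify f' pB').
  split; [exact (classify_mono pB Hf)|split; [exact (classify_mono pB' Hf')|]].
  rewrite <- (classify_natural pB m (Phi_comp_closed m pB)),
          <- (classify_natural pB' m' (Phi_comp_closed m' pB')).
  exact (classify_ext Hsq).
Qed.

End ClassifyingMaps.

Theorem proposition2p2 (C : Cat) (P : C -> Prop)
  (HC : ActionRepresentable C) (HP : Birkhoff C P)
  (S B B' : FullSub C P) (m : @Hom (FullSub C P) S B) (m' : @Hom (FullSub C P) S B')
  (hm : Mono m) (hm' : Mono m')
  (D : C) (u : @Hom C (proj1_sig B) D) (u' : @Hom C (proj1_sig B') D)
  (hu : Mono u) (hu' : Mono u')
  (X : FullSub C P) (R : C)
  (Phi : forall Y : C, @Hom C Y R -> SplitExt Y (proj1_sig X))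
  (HR : IsSplExtRepresentation Phi)
  (v : @Hom C D R) (hv : Mono v)
  (H1 : u \o (m : @Hom C (proj1_sig S) (proj1_sig B))
        = u' \o (m' : @Hom C (proj1_sig S) (proj1_sig B')))
  (H2 : ~ Amalgamable m m')
  (H3 : P (se_A (Phi (proj1_sig B) (v \o u))) /\ P (se_A (Phi (proj1_sig B') (v \o u')))) :
  ~ WeaklyActionRepresentable (FullSub C P) /\ ~ SplExtRepresentable (FullSub C P).
Proof.
  destruct HC as [[z hz] _].
  pose proof (Birkhoff_zero_obj HP hz (proj2_sig X)) as pz.
  destruct HR as [_ [Phi_inj Phi_nat]].
  destruct H3 as [pB pB'].
  assert (NW : ~ WeaklyActionRepresentable (FullSub C P)).
  { intros W. destruct (W X) as [M [tau [Hinv [Hinj Hnat]]]]. apply H2.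
    apply (Amalgamable_classify HP pz hz Phi_inj Phi_nat Hinv Hinj Hnat
             (mono_comp hv hu) (mono_comp hv hu')); [|exact pB|exact pB'].
    rewrite <- !comp_assoc, H1. reflexivity. }
  split; [exact NW|].
  intros HS. exact (NW (SplExtRepresentable_weakly HS)).
Qed.
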